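(* Let $n\ge 1$, let $M_n=\{1,\dots,n\}$, and let $\mathcal{F}\subset 2^{M_n}$ be a union-closed family (i.e. $A\cup B\in\mathcal{F}$ whenever $A,B\in\mathcal{F}$) with $\bigcup_{A\in\mathcal{F}}A=M_n$. Then for any $A\in\mathcal{F}$ with $|A|\ge 2$, there exists $y\in A$ such that $$|\{F\in\mathcal{F}: y\in F\}|\ge \frac{1}{2^{|A|-2}+1}|\mathcal{F}|.$$
   Context: $|X|$ denotes the cardinality of a set $X$; $2^{M_n}$ is the power set of $M_n$. *)

From mathcomp Require Import all_boot all_order all_algebra.
Set Implicit Arguments. Unset Strict Implicit. Unset Printing Implicit Defensive.

(* The ground set M_n = {1,...,n} is modelled by 'I_n = {0,...,n-1}. *)
Definition union_closed (T : finType) (FF : {set {set T}}) : Prop :=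
  forall A B, A \in FF -> B \in FF -> A :|: B \in FF.

From mathcomp Require Import all_boot all_order all_algebra.
From mathcomp Require Import zify.
Import Order.TTheory GRing.Theory Num.Theory.

Set Implicit Arguments.
Unset Strict Implicit.
Unset Printing Implicit Defensive.

(* Pick distinct a, b in A and let S_x be the members containing x, S_A those
   containing A.  A member F avoiding both a and b is determined by the pair
   (F :&: A, F :|: A), where F :&: A is a subset of A minus {a, b} and
   F :|: A lies in S_A by union-closedness; so at most 2^(|A|-2) |S_A| members
   avoid both points.  As S_A is contained in S_a :&: S_b, this gives
   |F| <= |S_a| + |S_b| - |S_A| + 2^(|A|-2) |S_A|
      <= (2^(|A|-2) + 1) max(|S_a|, |S_b|). *)

Lemma setIU_inj (T : finType) (A : {set T}) :
  injective (fun F : {set T} => (F :&: A, F :|: A)).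
Proof.
move=> F G [eqI eqU]; apply/setP => x.
have /setP/(_ x) := eqI; have /setP/(_ x) := eqU.
by rewrite !inE; case: (x \in A); rewrite ?andbT ?andbF ?orbT ?orbF.
Qed.

Lemma cardsD1D1 (T : finType) (A : {set T}) a b :
  a \in A -> b \in A -> a != b -> #|A :\ a :\ b| = (#|A| - 2)%N.
Proof.
move=> aA bA ab; have := cardsD1 a A; have := cardsD1 b (A :\ a).
rewrite aA !inE eq_sym ab bA /=; lia.
Qed.

Section UnionClosed.

Variables (T : finType) (FF : {set {set T}}).
Hypothesis FF_uc : union_closed FF.

Lemma card_trace_subset_le (A D : {set T}) : A \in FF ->
  (#|[set F in FF | F :&: A \subset D]|
     <= 2 ^ #|D| * #|[set F in FF | A \subset F]|)%N.
Proof.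
move=> AF; rewrite -card_powerset -cardsX.
rewrite -(card_imset _ (@setIU_inj _ A)); apply/subset_leq_card/subsetP.
move=> _ /imsetP [F + ->]; rewrite inE => /andP [FF_F FAD].
by rewrite !inE FAD FF_uc //= subsetUr.
Qed.

Lemma card_avoiding_pair_le (A : {set T}) a b :
  A \in FF -> a \in A -> b \in A -> a != b ->
  (#|[set F in FF | (a \notin F) && (b \notin F)]|
     <= 2 ^ (#|A| - 2) * #|[set F in FF | A \subset F]|)%N.
Proof.
move=> AF aA bA ab; rewrite -(cardsD1D1 aA bA ab).
apply: leq_trans (card_trace_subset_le _ AF); apply/subset_leq_card/subsetP.
move=> F; rewrite !inE => /and3P [-> aF bF]; apply/subsetP => x.
rewrite !inE => /andP [xF ->]; rewrite andbT.
by apply/andP; split; apply: contraTneq xF => ->.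
Qed.

Lemma frequent_elem_in_member (A : {set T}) : A \in FF -> (2 <= #|A|)%N ->
  exists2 y, y \in A &
    (#|FF| <= (2 ^ (#|A| - 2) + 1) * #|[set F in FF | y \in F]|)%N.
Proof.
move=> AF /card_gt1P [a [b [aA bA ab]]].
set Sa := [set F in FF | a \in F]; set Sb := [set F in FF | b \in F].
set SA := [set F in FF | A \subset F].
have SA_sub x : x \in A -> SA \subset [set F in FF | x \in F].
  move=> xA; apply/subsetP => F; rewrite !inE => /andP [-> /subsetP]; exact.
have card_FF : #|FF| =
    (#|Sa :|: Sb| + #|[set F in FF | (a \notin F) && (b \notin F)]|)%N.
  have Sab_sub : Sa :|: Sb \subset FF.
    by apply/subsetP => F; rewrite !inE => /orP [] /andP [].
  rewrite -(cardsID (Sa :|: Sb) FF) (setIidPr Sab_sub); congr (_ + _)%N.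
  apply: eq_card => F; rewrite !inE.
  by case: (F \in FF) (a \in F) (b \in F) => [] [] [].
(* Avoids the truncated subtraction in (2^(|A|-2) - 1) |S_A| <= ... |S_y|. *)
have [q pow_eq] : exists q, 2 ^ (#|A| - 2) = q.+1.
  by exists (2 ^ (#|A| - 2)).-1; rewrite prednK ?expn_gt0.
have SA_le x : x \in A -> (q * #|SA| <= q * #|[set F in FF | x \in F]|)%N.
  by move=> xA; rewrite leq_mul2l subset_leq_card ?SA_sub ?orbT.
have SA_Sab : SA \subset Sa :&: Sb by rewrite subsetI !SA_sub.
move: (card_avoiding_pair_le AF aA bA ab) (SA_le a aA) (SA_le b bA).
rewrite pow_eq -/Sa -/Sb -/SA.
have := cardsUI Sa Sb; have := subset_leq_card SA_Sab.
have [le_ba | lt_ab] := leqP #|Sb| #|Sa|.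
  by exists a => //; rewrite -/Sa; nia.
by exists b => //; rewrite -/Sb; nia.
Qed.

End UnionClosed.

Theorem proposition3p4 (n : nat) (FF : {set {set 'I_n}}) :
  (1 <= n)%N ->
  union_closed FF ->
  \bigcup_(A in FF) A = [set: 'I_n] ->
  forall A, A \in FF -> (2 <= #|A|)%N ->
  exists2 y, y \in A &
    ((#|[set F in FF | y \in F]|%:R : rat) >=
       (2 ^ (#|A| - 2) + 1)%:R^-1 * #|FF|%:R)%R.
Proof.
move=> _ uc _ A AF A2.
have [y yA le] := frequent_elem_in_member uc AF A2.
exists y => //.
have pos : (0 < (2 ^ (#|A| - 2) + 1)%:R :> rat)%R by rewrite ltr0n addn1.
by rewrite mulrC ler_pdivrMr // mulrC -natrM ler_nat.
Qed.
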